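(* Let $\mathcal H_A,\mathcal H_B$ be finite-dimensional complex Hilbert spaces and let $\rho$ be a separable density matrix on $\mathcal H_A\otimes\mathcal H_B$. Let $\rho^{T_B}=(\mathbf 1_A\otimes T)\rho$ be its partial transpose, where $T$ is transposition in a chosen basis of $\mathcal H_B$. If $\mathcal R(\rho)\neq\mathcal R(\rho^{T_B})$, then either $\mathcal L_{\mathcal E}(\rho)>\mathcal R(\rho)$ or $\mathcal L_{\mathcal E}(\rho^{T_B})>\mathcal R(\rho^{T_B})$.
   Context: A density matrix is a positive semidefinite operator of trace one. $\rho$ is separable if it can be written as $\rho=\sum_i p_i\,|\psi_i\rangle\langle\psi_i|\otimes|\phi_i\rangle\langle\phi_i|$ with $p_i>0$ and unit vectors $\psi_i\in\mathcal H_A,\phi_i\in\mathcal H_B$ (a separable decomposition). $\mathcal R(\rho)$ denotes the rank of $\rho$. For a separable $\rho$, the optimal ensemble cardinality $\mathcal L_{\mathcal E}(\rho)$ is the least number $k$ of distinct pure product states $|\psi_i\rangle|\phi_i\rangle$ needed in a separable decomposition of $\rho$. (For separable $\rho$, $\rho^{T_B}$ is again a separable density matrix.) *)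

(* Complex scalars: an arbitrary numClosedFieldType C
   (covers C = R[i], the complex numbers). *)
From HB Require Import structures.
From mathcomp Require Import all_boot all_order all_algebra.
From mathcomp Require Import boolp.
Set Implicit Arguments. Unset Strict Implicit. Unset Printing Implicit Defensive.
Import Order.TTheory GRing.Theory Num.Theory.
Local Open Scope ring_scope.

Section QDefs.
Variable C : numClosedFieldType.

Definition adjmx m n (A : 'M[C]_(m, n)) : 'M[C]_(n, m) :=
  map_mx (@Num.conj C) A^T.

Definition psd n (A : 'M[C]_n) : Prop :=
  adjmx A = A /\ forall v : 'cV[C]_n, 0 <= (adjmx v *m A *m v) 0 0.

Definition density n (A : 'M[C]_n) : Prop := psd A /\ \tr A = 1.

Definition unit_vec n (v : 'cV[C]_n) : Prop := (adjmx v *m v) 0 0 = 1.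

Definition proj n (v : 'cV[C]_n) : 'M[C]_n := v *m adjmx v.

(* H_A (x) H_B is C^(dA*dB); basis vector (a,b) has index mxvec_index a b *)
Definition tidx dA dB (k : 'I_(dA * dB)) : 'I_dA * 'I_dB :=
  enum_val (cast_ord (esym (mxvec_cast dA dB)) k).

Definition opkron dA dB (X : 'M[C]_dA) (Y : 'M[C]_dB) : 'M[C]_(dA * dB) :=
  \matrix_(k, l) (X (tidx k).1 (tidx l).1 * Y (tidx k).2 (tidx l).2).

(* partial transpose on B, in the standard basis of H_B *)
Definition ptransB dA dB (rho : 'M[C]_(dA * dB)) : 'M[C]_(dA * dB) :=
  \matrix_(k, l) rho (mxvec_index (tidx k).1 (tidx l).2)
                     (mxvec_index (tidx l).1 (tidx k).2).

Definition sep_decomp dA dB (rho : 'M[C]_(dA * dB)) (k : nat) : Prop :=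
  exists (p : 'I_k -> C) (psi : 'I_k -> 'cV[C]_dA) (phi : 'I_k -> 'cV[C]_dB),
    [/\ forall i, 0 < p i,
        forall i, unit_vec (psi i) /\ unit_vec (phi i),
        forall i j, i != j ->
          opkron (proj (psi i)) (proj (phi i)) != opkron (proj (psi j)) (proj (phi j))
      & rho = \sum_(i < k) p i *: opkron (proj (psi i)) (proj (phi i))].

Definition separable dA dB (rho : 'M[C]_(dA * dB)) : Prop :=
  density rho /\ exists k, sep_decomp rho k.

(* optimal ensemble cardinality L_E(rho): least k admitting a separable
   decomposition with k distinct pure product states (0 if none exists) *)
Definition LE dA dB (rho : 'M[C]_(dA * dB)) : nat :=
  match pselect (exists k, `[< sep_decomp rho k >]) with
  | left h => ex_minn h
  | right _ => 0%N
  end.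

End QDefs.

(* A separable decomposition with k pure product states writes rho as a sum of
   k rank-one operators, so rank rho <= k.  Partially transposing each term
   replaces phi_i by its complex conjugate, which turns a decomposition of rho
   with k distinct product states into one of rho^{T_B} with k distinct
   product states.  Hence rank rho^{T_B} <= L(rho) and, since the partial
   transpose is an involution, rank rho <= L(rho^{T_B}).  If both L(rho) <=
   rank rho and L(rho^{T_B}) <= rank rho^{T_B}, the two ranks would be equal. *)
From mathcomp Require Import all_boot all_order all_algebra.
From mathcomp Require Import boolp.
Set Implicit Arguments. Unset Strict Implicit. Unset Printing Implicit Defensive.
Import Order.TTheory GRing.Theory Num.Theory.
Local Open Scope ring_scope.

Lemma mxrank_sum_le (F : fieldType) m n (I : Type) (r : seq I) (P : pred I)
    (M : I -> 'M[F]_(m, n)) :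
  (\rank (\sum_(i <- r | P i) M i)%R <= \sum_(i <- r | P i) \rank (M i))%N.
Proof.
apply: (big_ind2 (fun (A : 'M_(m, n)) k => \rank A <= k)%N) => //.
- by rewrite mxrank0.
- by move=> A a B b rA rB; apply: leq_trans (mxrank_add A B) (leq_add rA rB).
Qed.

Section ConjugateVector.
Variables (C : numClosedFieldType) (n : nat).

Definition conjv (v : 'cV[C]_n) : 'cV[C]_n := map_mx (@Num.conj C) v.

Lemma tr_proj (v : 'cV[C]_n) : (proj v)^T = proj (conjv v).
Proof.
apply/matrixP=> i j; rewrite !mxE; apply: eq_bigr => l _.
by rewrite !mxE conjCK mulrC.
Qed.

Lemma unit_vec_conjv (v : 'cV[C]_n) : unit_vec v -> unit_vec (conjv v).
Proof.
rewrite /unit_vec !mxE => <-; apply: eq_bigr => l _.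
by rewrite !mxE conjCK mulrC.
Qed.

End ConjugateVector.

Section PartialTranspose.
Variables (C : numClosedFieldType) (dA dB : nat).

Lemma tidx_index (a : 'I_dA) (b : 'I_dB) : tidx (mxvec_index a b) = (a, b).
Proof. by rewrite /tidx /mxvec_index cast_ordK enum_rankK. Qed.

Lemma index_tidx (k : 'I_(dA * dB)) : mxvec_index (tidx k).1 (tidx k).2 = k.
Proof. by rewrite /tidx /mxvec_index -surjective_pairing enum_valK cast_ordKV. Qed.

Lemma ptransBK : involutive (@ptransB C dA dB).
Proof. by move=> M; apply/matrixP=> k l; rewrite !mxE !tidx_index /= !index_tidx. Qed.

Lemma ptransB_opkron (X : 'M[C]_dA) (Y : 'M[C]_dB) :
  ptransB (opkron X Y) = opkron X Y^T.
Proof. by apply/matrixP=> k l; rewrite !mxE !tidx_index. Qed.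

Lemma ptransB_sum (I : Type) (r : seq I) (P : pred I) (p : I -> C)
    (M : I -> 'M[C]_(dA * dB)) :
  ptransB (\sum_(i <- r | P i) p i *: M i) = \sum_(i <- r | P i) p i *: ptransB (M i).
Proof.
apply/matrixP=> k l; rewrite mxE !summxE; apply: eq_bigr => i _.
by rewrite !mxE.
Qed.

Lemma opkron_outer (u : 'cV[C]_dA) (x : 'rV[C]_dA) (w : 'cV[C]_dB) (z : 'rV[C]_dB) :
  opkron (u *m x) (w *m z) =
  (\col_k (u (tidx k).1 0 * w (tidx k).2 0)) *m (\row_l (x 0 (tidx l).1 * z 0 (tidx l).2)).
Proof. by apply/matrixP=> k l; rewrite !mxE !big_ord1 !mxE mulrACA. Qed.

Lemma rank_opkron_proj (u : 'cV[C]_dA) (w : 'cV[C]_dB) :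
  (\rank (opkron (proj u) (proj w)) <= 1)%N.
Proof. by rewrite /proj opkron_outer; apply: leq_trans (mxrankM_maxl _ _) (rank_leq_col _). Qed.

Lemma sep_decomp_rank (rho : 'M[C]_(dA * dB)) k :
  sep_decomp rho k -> (\rank rho <= k)%N.
Proof.
case=> p [psi [phi [_ _ _ ->]]].
apply: leq_trans (mxrank_sum_le _ _ _) _.
rewrite -[k in (_ <= k)%N]card_ord -sum1_card.
apply: leq_sum => i _.
exact: leq_trans (mxrank_scale _ _) (rank_opkron_proj _ _).
Qed.

Lemma sep_decomp_ptransB (rho : 'M[C]_(dA * dB)) k :
  sep_decomp rho k -> sep_decomp (ptransB rho) k.
Proof.
case=> p [psi [phi [p_gt0 unit_psi_phi distinct ->]]].
exists p, psi, (fun i => conjv (phi i)); split=> //.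
- by move=> i; have [? ?] := unit_psi_phi i; split; last exact: unit_vec_conjv.
- move=> i j /distinct; apply: contra => /eqP E; apply/eqP.
  by apply: (can_inj ptransBK); rewrite !ptransB_opkron !tr_proj.
- by rewrite ptransB_sum; apply: eq_bigr => i _; rewrite ptransB_opkron tr_proj.
Qed.

Lemma sep_decomp_LE (rho : 'M[C]_(dA * dB)) k :
  sep_decomp rho k -> sep_decomp rho (LE rho).
Proof.
move=> rho_k; rewrite /LE; case: pselect => [h|[]]; last by exists k; apply/asboolP.
by case: ex_minnP => m /asboolP.
Qed.

Lemma rank_ptransB_le_LE (rho : 'M[C]_(dA * dB)) k :
  sep_decomp rho k -> (\rank (ptransB rho) <= LE rho)%N.
Proof. by move=> /sep_decomp_LE /sep_decomp_ptransB /sep_decomp_rank. Qed.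

End PartialTranspose.

Theorem theorem1 (C : numClosedFieldType) (dA dB : nat)
    (rho : 'M[C]_(dA * dB)) :
  separable rho ->
  \rank rho <> \rank (ptransB rho) ->
  (\rank rho < LE rho)%N \/ (\rank (ptransB rho) < LE (ptransB rho))%N.
Proof.
case=> _ [k rho_k] rank_neq.
have rankT_le := rank_ptransB_le_LE rho_k.
have := rank_ptransB_le_LE (sep_decomp_ptransB rho_k); rewrite ptransBK => rank_le.
case: (ltnP (\rank rho) (LE rho)) => [|LE_le]; first by left.
case: (ltnP (\rank (ptransB rho)) (LE (ptransB rho))) => [|LET_le]; first by right.
case: rank_neq; apply/eqP; rewrite eqn_leq.
by rewrite (leq_trans rank_le LET_le) (leq_trans rankT_le LE_le).
Qed.
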